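(* For any voter matrix $V$, $r_V\ge \frac13$.
   Context: A voter matrix with $t$ topics is a matrix $V\in\{Y,N\}^{n\times t}$ for positive integers $n,t$ (rows are voters), subject to the standing assumption that in every column the number of entries $Y$ is at least the number of entries $N$. A proposal is a vector $p\in\{Y,N\}^t$. A voter $v$ supports $p$ if the Hamming distance between $v$ and $p$ is at most $t/2$; $p$ is supported by $V$ if at least $n/2$ rows of $V$ support $p$. For $i=1,\dots,t$ let $m_i$ be the fraction of entries $Y$ in column $i$ of $V$, and $m_V=\frac1t\sum_i m_i$. For a proposal $p$ let $m_i'=m_i$ if $p_i=Y$ and $m_i'=1-m_i$ if $p_i=N$; set $R_p=\frac1t\sum_i m_i'$ and $r_p=R_p/m_V$. $r_V$ is the maximum of $r_p$ over all proposals $p$ supported by $V$. *)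

(* Y is encoded as [true], N as [false]. *)
From mathcomp Require Import all_boot all_order all_algebra.
Set Implicit Arguments. Unset Strict Implicit. Unset Printing Implicit Defensive.
Import Order.TTheory GRing.Theory Num.Theory.
Local Open Scope ring_scope.

(* A voter matrix: n voters (rows), t topics (columns), entries Y/N. *)
Definition vmatrix (n t : nat) := 'M[bool]_(n, t).
Definition proposal (t : nat) := 'I_t -> bool.

Definition voter_matrix (n t : nat) (V : vmatrix n t) : Prop :=
  forall j : 'I_t, (#|[set i | ~~ V i j]| <= #|[set i | V i j]|)%N.

Definition hamming (n t : nat) (V : vmatrix n t) (i : 'I_n) (p : proposal t) : nat :=
  #|[set j | V i j != p j]|.

Definition supports (n t : nat) (V : vmatrix n t) (i : 'I_n) (p : proposal t) : bool :=
  (2 * hamming V i p <= t)%N.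

Definition supported (n t : nat) (V : vmatrix n t) (p : proposal t) : bool :=
  (n <= 2 * #|[set i | supports V i p]|)%N.

Definition mcol (n t : nat) (V : vmatrix n t) (j : 'I_t) : rat :=
  (#|[set i | V i j]|)%:R / n%:R.

Definition mV (n t : nat) (V : vmatrix n t) : rat :=
  (\sum_(j < t) mcol V j) / t%:R.

Definition Rp (n t : nat) (V : vmatrix n t) (p : proposal t) : rat :=
  (\sum_(j < t) (if p j then mcol V j else 1 - mcol V j)) / t%:R.

Definition rp (n t : nat) (V : vmatrix n t) (p : proposal t) : rat :=
  Rp V p / mV V.

(* Let p_k vote N on the first k topics and Y on the others, so that p_0 is
   the all-Y proposal with R = m_V and p_t the all-N one with R = 1 - m_V.
   Every voter supports p or its complement, hence one of the two is
   supported, and R of the complement is 1 - R_p.  It therefore suffices to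
   find k with m_V/3 <= R_{p_k} <= 1 - m_V/3.  Since m_j >= 1/2, each step
   k -> k+1 lowers R by at most 1/t, which is smaller than the width
   1 - 2 m_V/3 >= 1/3 of that band as soon as t >= 3, so a discrete
   intermediate value argument applies.  For t <= 2 the all-Y proposal
   itself is supported: a voter with Y on topic 0 is within distance
   t - 1 <= t/2 of it, and at least half of the voters are such. *)
From mathcomp Require Import all_boot all_order all_algebra.
From mathcomp Require Import lra zify.
Set Implicit Arguments. Unset Strict Implicit. Unset Printing Implicit Defensive.
Import Order.TTheory GRing.Theory Num.Theory.
Local Open Scope ring_scope.

Lemma discrete_ivt (R : realDomainType) (f : nat -> R) (lo hi d : R) (T : nat) :
  lo <= f 0%N -> f T <= hi -> lo + d <= hi ->
  (forall k, (k < T)%N -> f k - d <= f k.+1) ->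
  exists2 k, (k <= T)%N & lo <= f k <= hi.
Proof.
move=> lo_f0 fT_hi band drop.
have [|k fk_hi k_min] := ex_minnP (P := fun k => f k <= hi); first by exists T.
exists k; first exact: k_min.
rewrite fk_hi andbT; case: k fk_hi k_min => [//|k] _ k_min.
have hi_fk : hi < f k by rewrite ltNge; apply/negP => /k_min; rewrite ltnn.
have := drop k (k_min _ fT_hi); lra.
Qed.

Section VoterMatrix.

Variables (n t : nat) (V : vmatrix n t).

Definition negp (p : proposal t) : proposal t := fun j => ~~ p j.

Definition prefixN (k : nat) : proposal t := fun j => (k <= j)%N.

Lemma hamming_negp i p : (hamming V i p + hamming V i (negp p))%N = t.
Proof.
rewrite /hamming -[t in RHS]card_ord -(cardsC [set j | V i j != p j]).
congr (_ + _)%N; apply: eq_card => j.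
by rewrite !inE /negp; case: (V i j); case: (p j).
Qed.

Lemma supported_or_negp p : supported V p \/ supported V (negp p).
Proof.
rewrite /supported.
set A := [set i | supports V i p]; set B := [set i | supports V i (negp p)].
have cover : [set: 'I_n] \subset A :|: B.
  apply/subsetP => i _; rewrite !inE /supports; apply/orP.
  have := hamming_negp i p; lia.
have := leq_trans (subset_leq_card cover) (leq_card_setU A B).
rewrite cardsT card_ord; lia.
Qed.

Lemma hamming_lt_of_agree i p j : V i j = p j -> (hamming V i p < t)%N.
Proof.
move=> agree; rewrite /hamming -[t in (_ < t)%N]card_ord -cardsT.
apply: proper_card; rewrite properT; apply/negP => /eqP full.
by have := in_setT j; rewrite -full inE agree eqxx.
Qed.

Lemma eq_Rp p q : p =1 q -> Rp V p = Rp V q.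
Proof. by move=> pq; rewrite /Rp; congr (_ / _); apply: eq_bigr => j _; rewrite pq. Qed.

Lemma Rp_all_yes : Rp V (fun _ => true) = mV V.
Proof. by []. Qed.

Lemma Rp_prefixN0 : Rp V (prefixN 0) = mV V.
Proof. by rewrite -Rp_all_yes; apply: eq_Rp. Qed.

Hypothesis t_gt0 : (0 < t)%N.

Lemma Rp_negp p : Rp V (negp p) = 1 - Rp V p.
Proof.
have t_neq0 : t%:R != 0 :> rat by rewrite pnatr_eq0 -lt0n.
rewrite /Rp -[X in X - _](divff t_neq0) -mulrBl; congr (_ / _).
rewrite -[in t%:R](card_ord t) -sumr_const -sumrB.
by apply: eq_bigr => j _; rewrite /negp; case: (p j) => //=; rewrite opprB addrC subrK.
Qed.

Lemma Rp_prefixN_t : Rp V (prefixN t) = 1 - mV V.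
Proof.
rewrite -Rp_all_yes -Rp_negp; apply: eq_Rp => j.
by rewrite /prefixN /negp leqNgt ltn_ord.
Qed.

Hypothesis n_gt0 : (0 < n)%N.

Lemma mcol_le1 j : mcol V j <= 1.
Proof.
rewrite /mcol ler_pdivrMr ?ltr0n // mul1r ler_nat -[n in (_ <= n)%N]card_ord.
exact: max_card.
Qed.

Lemma Rp_prefixN_step k : (k < t)%N -> Rp V (prefixN k) - t%:R^-1 <= Rp V (prefixN k.+1).
Proof.
move=> k_lt_t; set kt := Ordinal k_lt_t.
rewrite /Rp -{2}[t%:R^-1]mul1r -mulrBl ler_wpM2r ?invr_ge0 ?ler0n //.
rewrite (bigD1 kt) // [leRHS](bigD1 kt) //= /prefixN leqnn ltnn.
have same_rest : \sum_(j | j != kt) (if (k <= j)%N then mcol V j else 1 - mcol V j)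
    = \sum_(j | j != kt) (if (k < j)%N then mcol V j else 1 - mcol V j).
  apply: eq_bigr => j j_neq_k; congr (if _ then _ else _).
  by move: j_neq_k; rewrite leq_eqVlt -(inj_eq val_inj) eq_sym => /negbTE ->.
rewrite same_rest; have := mcol_le1 kt; lra.
Qed.

Lemma mV_le1 : mV V <= 1.
Proof.
rewrite /mV ler_pdivrMr ?ltr0n // mul1r -[t in leRHS]card_ord -sumr_const.
by apply: ler_sum => j _; apply: mcol_le1.
Qed.

Hypothesis hV : voter_matrix V.

Lemma col_half j : (n <= 2 * #|[set i | V i j]|)%N.
Proof.
have := cardsC [set i | V i j]; rewrite card_ord.
have -> : ~: [set i | V i j] = [set i | ~~ V i j] by apply/setP => i; rewrite !inE.
have := hV j; lia.
Qed.

Lemma mcol_ge_half j : 1 / 2 <= mcol V j.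
Proof.
rewrite /mcol ler_pdivlMr ?ltr0n // mulrAC ler_pdivrMr // mul1r.
by rewrite -natrM ler_nat mulnC col_half.
Qed.

Lemma mV_ge_half : 1 / 2 <= mV V.
Proof.
rewrite /mV ler_pdivlMr ?ltr0n // -[t in leLHS]card_ord -sumr_const mulr_sumr.
by apply: ler_sum => j _; rewrite mulr1; apply: mcol_ge_half.
Qed.

Lemma rp_ge c p : c * mV V <= Rp V p -> c <= rp V p.
Proof. by move=> cmV; rewrite /rp ler_pdivlMr //; have := mV_ge_half; lra. Qed.

Lemma supported_all_yes : (t <= 2)%N -> supported V (fun _ => true).
Proof.
move=> t_le2; set j0 := Ordinal t_gt0.
apply: leq_trans (col_half j0) _; rewrite leq_mul2l /=.
apply/subset_leq_card/subsetP => i; rewrite !inE /supports => yes_j0.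
have := @hamming_lt_of_agree i (fun _ => true) j0 yes_j0; lia.
Qed.

End VoterMatrix.

Arguments prefixN {t} k.

Theorem lemma5p1 (n t : nat) (hn : (0 < n)%N) (ht : (0 < t)%N)
  (V : vmatrix n t) (hV : voter_matrix V) :
  exists p : proposal t, supported V p /\ 1 / 3%:R <= rp V p.
Proof.
have mV_half := mV_ge_half ht hn hV; have mV_1 := mV_le1 V ht hn.
have [t_le2 | t_gt2] := leqP t 2.
  exists (fun _ => true); split; first exact: supported_all_yes.
  by apply: (rp_ge ht hn hV); rewrite Rp_all_yes; lra.
have inv_t : t%:R^-1 <= 1 / 3 :> rat.
  by rewrite mul1r lef_pV2 ?posrE ?ltr0n // ler_nat.
have [k _ /andP [lo hi]] :
    exists2 k, (k <= t)%N & mV V / 3 <= Rp V (prefixN k) <= 1 - mV V / 3.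
  apply: (discrete_ivt (f := fun k => Rp V (prefixN k)) (d := t%:R^-1)) => /=.
  - by rewrite Rp_prefixN0; lra.
  - by rewrite (Rp_prefixN_t V ht); lra.
  - lra.
  - exact: Rp_prefixN_step.
have [supp | supp] := supported_or_negp V (prefixN k).
- by exists (prefixN k); split => //; apply: (rp_ge ht hn hV); lra.
- exists (negp (prefixN k)); split => //; apply: (rp_ge ht hn hV).
  by rewrite Rp_negp //; lra.
Qed.
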